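(* Let $\epsilon\in(0,1)$ and let $n$ be a positive integer, and set $c=Q^{-1}(\epsilon)/\sqrt{n}$, where $Q^{-1}$ is the inverse of the Gaussian $Q$-function. Define, for $\gamma\geq 0$, \[ f(\gamma)=\ln(1+\gamma)-c\sqrt{\frac{2\gamma}{1+\gamma}} . \] Then $f$ is increasing in $\gamma$ on the set $\gamma\geq\bar{\gamma}$, where $\bar{\gamma}=\frac{1}{2}\left(\sqrt{1+2c^{2}}-1\right)$.
   Context: $f(\gamma)$ is the finite-block-length (normal approximation) rate of a user with SINR $\gamma$, block length $n$ and maximum tolerable decoding error probability $\epsilon$, using channel dispersion $v=2\gamma/(1+\gamma)$, i.e. $f(\gamma)=\ln(1+\gamma)-Q^{-1}(\epsilon)\sqrt{v/n}$. *)

From Stdlib Require Import Reals ClassicalEpsilon.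
From Coquelicot Require Import Coquelicot.
Open Scope R_scope.

Definition Qfun (x : R) : R :=
  / sqrt (2 * PI) *
  RInt_gen (fun t => exp (- (t ^ 2) / 2)) (at_point x) (Rbar_locally p_infty).

(* Inverse Q-function: the (unique, Q being a decreasing bijection R -> (0,1))
   real x with Q x = eps. *)
Definition Qinv (eps : R) : R :=
  epsilon (inhabits 0) (fun x => Qfun x = eps).

Definition fbl (eps : R) (n : nat) (g : R) : R :=
  ln (1 + g) - (Qinv eps / sqrt (INR n)) * sqrt (2 * g / (1 + g)).

(** For [c <= 0] both summands of the rate are increasing.  For [c > 0] the
    derivative [1/(1+g) - c / ((1+g)^2 sqrt(2g/(1+g)))] has the sign of
    [sqrt(2g(1+g)) - c], which is positive exactly when [2g^2 + 2g > c^2],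
    i.e. beyond the positive root [gbar] of [2g^2 + 2g - c^2]; the mean value
    theorem concludes. *)
From Stdlib Require Import Reals Lra.
From Coquelicot Require Import Coquelicot.
Open Scope R_scope.

Definition rate (c g : R) : R := ln (1 + g) - c * sqrt (2 * g / (1 + g)).

Definition rate_threshold (c : R) : R := (sqrt (1 + 2 * c ^ 2) - 1) / 2.

Lemma dispersion_increasing x y : 0 <= x < y -> 2 * x / (1 + x) < 2 * y / (1 + y).
Proof.
intros Hxy.
apply (Rmult_lt_reg_r ((1 + x) * (1 + y))); [nra|].
replace (2 * x / (1 + x) * ((1 + x) * (1 + y))) with (2 * x * (1 + y)) by (field; lra).
replace (2 * y / (1 + y) * ((1 + x) * (1 + y))) with (2 * y * (1 + x)) by (field; lra).
lra.
Qed.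

Lemma rate_increasing_nonpos c x y : c <= 0 -> 0 <= x < y -> rate c x < rate c y.
Proof.
intros Hc Hxy; unfold rate.
assert (Hln : ln (1 + x) < ln (1 + y)) by (apply ln_increasing; lra).
assert (Hsqrt : sqrt (2 * x / (1 + x)) <= sqrt (2 * y / (1 + y))).
{ apply sqrt_le_1_alt, Rlt_le, dispersion_increasing; lra. }
nra.
Qed.

Lemma is_derive_rate c x : 0 < x ->
  is_derive (rate c) x (/ (1 + x) - c / ((1 + x) ^ 2 * sqrt (2 * x / (1 + x)))).
Proof.
intros Hx; unfold rate.
assert (Hq : 0 < 2 * x / (1 + x)) by (apply Rdiv_lt_0_compat; lra).
assert (Hs : 0 < sqrt (2 * x / (1 + x))) by (apply sqrt_lt_R0; exact Hq).
auto_derive.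
- unfold Rdiv in Hq; repeat split; lra.
- unfold Rdiv; field; lra.
Qed.

Lemma rate_derive_pos c x : 0 < x -> c ^ 2 < 2 * x * (1 + x) ->
  0 < / (1 + x) - c / ((1 + x) ^ 2 * sqrt (2 * x / (1 + x))).
Proof.
intros Hx Hc.
set (s := sqrt (2 * x / (1 + x))).
assert (Hs : 0 < s) by (apply sqrt_lt_R0, Rdiv_lt_0_compat; lra).
(* [(1 + x) s = sqrt (2x(1+x))], whose square exceeds [c^2]. *)
assert (Ht2 : ((1 + x) * s) ^ 2 = 2 * x * (1 + x)).
{ rewrite Rpow_mult_distr; unfold s; rewrite pow2_sqrt.
  - field; lra.
  - apply Rlt_le, Rdiv_lt_0_compat; lra. }
assert (Hct : c < (1 + x) * s).
{ assert (Ht : 0 < (1 + x) * s) by nra.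
  revert Ht Ht2; generalize ((1 + x) * s); intros t Ht Ht2; nra. }
replace (/ (1 + x) - c / ((1 + x) ^ 2 * s)) with (((1 + x) * s - c) / ((1 + x) ^ 2 * s))
  by (field; lra).
apply Rdiv_lt_0_compat; [lra | nra].
Qed.

Lemma sqr_lt_above_rate_threshold c x : rate_threshold c < x -> c ^ 2 < 2 * x * (1 + x).
Proof.
unfold rate_threshold; intros Hx.
assert (Hr : sqrt (1 + 2 * c ^ 2) ^ 2 = 1 + 2 * c ^ 2) by (apply pow2_sqrt; nra).
assert (Hr0 : 0 <= sqrt (1 + 2 * c ^ 2)) by apply sqrt_pos.
nra.
Qed.

Lemma rate_threshold_pos c : 0 < c -> 0 < rate_threshold c.
Proof.
intros Hc; unfold rate_threshold.
assert (H1 : 1 < sqrt (1 + 2 * c ^ 2)).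
{ rewrite <- sqrt_1 at 1; apply sqrt_lt_1; nra. }
lra.
Qed.

Theorem rate_increasing c x y :
  0 <= x -> rate_threshold c <= x -> x < y -> rate c x < rate c y.
Proof.
intros Hx0 Hx Hxy.
destruct (Rle_lt_dec c 0) as [Hc | Hc]; [apply rate_increasing_nonpos; lra|].
(* [rate c] is not differentiable at [0]; for [c > 0] the threshold keeps
   [[x, y]] away from it. *)
pose proof (rate_threshold_pos c Hc) as Hthreshold_pos.
destruct (MVT_cor2 (rate c)
  (fun g => / (1 + g) - c / ((1 + g) ^ 2 * sqrt (2 * g / (1 + g)))) x y Hxy)
  as [z [Hmvt Hz]].
{ intros g Hg; apply is_derive_Reals, is_derive_rate; lra. }
assert (Hdz := rate_derive_pos c z ltac:(lra) (sqr_lt_above_rate_threshold c z ltac:(lra))).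
nra.
Qed.

Theorem lemma1 (eps : R) (n : nat) :
  0 < eps < 1 -> (0 < n)%nat ->
  let c := Qinv eps / sqrt (INR n) in
  let gbar := (sqrt (1 + 2 * c ^ 2) - 1) / 2 in
  forall g1 g2 : R, 0 <= g1 -> gbar <= g1 -> g1 < g2 ->
    fbl eps n g1 < fbl eps n g2.
Proof.
intros _ _ c gbar g1 g2 H0 Hbar H12.
exact (rate_increasing c g1 g2 H0 Hbar H12).
Qed.
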